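(* Let $D$ be a non-commutative division ring and $R$ a maximal subring of $D$. Then at least one of the following holds: (1) $N(R)=U(R)\cup\{0\}$; (2) $R$ is a division ring and $[D:R]_l=[D:R]_r$ is finite; (3) $R$ is not a division ring and there exists a nonzero non-unit $a\in R$ with $aR=Ra$ (so that, in particular, $R$ is an Ore $G$-domain whose division ring of quotients is $D$).
   Context: All rings are associative unital and subrings share the identity. A maximal subring of a ring $T$ is a proper subring maximal under inclusion among proper subrings of $T$. $N(R)=\{x\in D: xR=Rx\}$, $U(R)$ is the set of units of $R$. $[D:R]_l$, $[D:R]_r$ are the left and right dimensions of $D$ over a subdivision ring $R$. A $G$-domain is a domain in which the intersection of all nonzero prime ideals is nonzero. *)

From mathcomp Require Import all_boot all_algebra.
Set Implicit Arguments. Unset Strict Implicit. Unset Printing Implicit Defensive.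
Import GRing.Theory.
Local Open Scope ring_scope.

Definition is_division_ring (D : unitRingType) : Prop :=
  forall x : D, x != 0 -> x \is a GRing.unit.

Definition is_subring (D : unitRingType) (R : D -> Prop) : Prop :=
  [/\ R 1, (forall x y, R x -> R y -> R (x - y)) & (forall x y, R x -> R y -> R (x * y))].

Definition is_maximal_subring (D : unitRingType) (R : D -> Prop) : Prop :=
  [/\ is_subring R, (exists x, ~ R x) &
      forall S : D -> Prop, is_subring S -> (forall x, R x -> S x) ->
        (exists x, ~ S x) -> forall x, S x -> R x].

Definition unitsR (D : unitRingType) (R : D -> Prop) (x : D) : Prop :=
  R x /\ exists y, [/\ R y, x * y = 1 & y * x = 1].

Definition normalizerR (D : unitRingType) (R : D -> Prop) (x : D) : Prop :=
  forall z, (exists r, R r /\ z = x * r) <-> (exists r, R r /\ z = r * x).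

Definition sub_division_ring (D : unitRingType) (R : D -> Prop) : Prop :=
  forall x, R x -> x != 0 -> unitsR R x.

Definition left_basis_of_size (D : unitRingType) (R : D -> Prop) (n : nat) : Prop :=
  exists b : 'I_n -> D,
    (forall d : D, exists c : 'I_n -> D, (forall i, R (c i)) /\ d = \sum_i c i * b i) /\
    (forall c : 'I_n -> D, (forall i, R (c i)) -> \sum_i c i * b i = 0 -> forall i, c i = 0).

Definition right_basis_of_size (D : unitRingType) (R : D -> Prop) (n : nat) : Prop :=
  exists b : 'I_n -> D,
    (forall d : D, exists c : 'I_n -> D, (forall i, R (c i)) /\ d = \sum_i b i * c i) /\
    (forall c : 'I_n -> D, (forall i, R (c i)) -> \sum_i b i * c i = 0 -> forall i, c i = 0).

(* If N(R) is larger than U(R) ∪ {0} (which it always contains), pick x in N(R),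
   x <> 0, not a unit of R. If x or x^-1 lies in R, that element witnesses (3).
   Otherwise, since x and x^-1 normalize R, R[x] = Σ R x^i and R[x^-1] are subrings
   properly containing R, so both equal D. From x ∈ R[x^-1] we get
   x^(n+1) ∈ Σ_{i<=n} R x^i, hence D = Σ_{i<N} R x^i. A nontrivial relation
   Σ_{i<=k} c_i x^i = 0 with c_k = a <> 0 gives a (Σ_{i<=k} R x^i) ⊆ Σ_{i<k} R x^i,
   hence D = Σ_{i<k} R x^i because a is invertible in D; shrinking as long as possible
   makes 1, x, ..., x^(m-1) a left basis, and also a right one as x^i R = R x^i.
   Comparing coefficients in b b^-1 = 1 shows b^-1 ∈ R for b ∈ R \ {0}: case (2). *)

From mathcomp Require Import all_boot all_algebra.
From Stdlib Require Import Classical.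
Set Implicit Arguments. Unset Strict Implicit. Unset Printing Implicit Defensive.
Import GRing.Theory.
Local Open Scope ring_scope.

Section Subring.
Variables (D : unitRingType) (R : D -> Prop).
Hypothesis subR : is_subring R.

Lemma subring1 : R 1. Proof. by case: subR. Qed.

Lemma subringB x y : R x -> R y -> R (x - y). Proof. by case: subR => _ + _; apply. Qed.

Lemma subringM x y : R x -> R y -> R (x * y). Proof. by case: subR => _ _; apply. Qed.

Lemma subring0 : R 0. Proof. by rewrite -(subrr 1); apply: subringB; apply: subring1. Qed.

Lemma subringN x : R x -> R (- x).
Proof. by move=> Rx; rewrite -sub0r; apply: subringB => //; apply: subring0. Qed.

Lemma subringD x y : R x -> R y -> R (x + y).
Proof. by move=> Rx Ry; rewrite -[y]opprK; apply: subringB => //; apply: subringN. Qed.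

Lemma subringX x n : R x -> R (x ^+ n).
Proof.
move=> Rx; elim: n => [|n IH]; first by rewrite expr0; apply: subring1.
by rewrite exprS; apply: subringM.
Qed.

Lemma normalizerR_mull y r : normalizerR R y -> R r -> exists2 r', R r' & y * r = r' * y.
Proof. by move=> Ny Rr; have [/(_ (ex_intro _ r (conj Rr erefl))) [r' []]] := Ny (y * r); exists r'. Qed.

Lemma normalizerR_mulr y r : normalizerR R y -> R r -> exists2 r', R r' & r * y = y * r'.
Proof. by move=> Ny Rr; have [_ /(_ (ex_intro _ r (conj Rr erefl))) [r' []]] := Ny (r * y); exists r'. Qed.

Lemma normalizerR0 : normalizerR R 0.
Proof. by split=> -[r [Rr ->]]; exists r; rewrite mul0r mulr0. Qed.

Lemma normalizerR_unit x : unitsR R x -> normalizerR R x.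
Proof.
move=> [Rx [y [Ry xy1 yx1]]] z; split=> -[r [Rr ->]].
- exists (x * r * y); split; first by apply: subringM => //; apply: subringM.
  by rewrite -mulrA yx1 mulr1.
- exists (y * r * x); split; first by apply: subringM => //; apply: subringM.
  by rewrite !mulrA xy1 mul1r.
Qed.

Lemma normalizerR1 : normalizerR R 1.
Proof. by split=> -[r [Rr ->]]; exists r; rewrite mul1r mulr1. Qed.

Lemma normalizerRM y z : normalizerR R y -> normalizerR R z -> normalizerR R (y * z).
Proof.
move=> Ny Nz w; split=> -[r [Rr ->]].
- have [r1 Rr1 zr] := normalizerR_mull Nz Rr; have [r2 Rr2 yr1] := normalizerR_mull Ny Rr1.
  by exists r2; rewrite -mulrA zr mulrA yr1 mulrA.
- have [r1 Rr1 ry] := normalizerR_mulr Ny Rr; have [r2 Rr2 r1z] := normalizerR_mulr Nz Rr1.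
  by exists r2; rewrite mulrA ry -mulrA r1z mulrA.
Qed.

Lemma normalizerRX y n : normalizerR R y -> normalizerR R (y ^+ n).
Proof.
move=> Ny; elim: n => [|n IH]; first by rewrite expr0; apply: normalizerR1.
by rewrite exprS; apply: normalizerRM.
Qed.

Lemma normalizerRV y : y \is a GRing.unit -> normalizerR R y -> normalizerR R y^-1.
Proof.
move=> Uy Ny z; split=> -[r [Rr ->]].
- have [r' Rr' ry] := normalizerR_mulr Ny Rr; exists r'; split=> //.
  by apply: (mulIr Uy); rewrite -mulrA ry mulKr // divrK.
- have [r' Rr' yr] := normalizerR_mull Ny Rr; exists r'; split=> //.
  by apply: (mulrI Uy); rewrite mulrA yr mulrK // mulVKr.
Qed.

Lemma normalizerR_conj y r : y \is a GRing.unit -> normalizerR R y -> R r -> R (y * r / y).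
Proof. by move=> Uy Ny Rr; have [r' Rr' ->] := normalizerR_mull Ny Rr; rewrite mulrK. Qed.

Lemma normalizerR_conjV y r : y \is a GRing.unit -> normalizerR R y -> R r -> R (y^-1 * r * y).
Proof.
move=> Uy Ny Rr; rewrite -{2}[y]invrK.
by apply: normalizerR_conj; rewrite ?unitrV //; apply: normalizerRV.
Qed.

End Subring.

Section PowSpan.
Variables (D : unitRingType) (R : D -> Prop) (x : D).
Hypothesis subR : is_subring R.

Definition pow_span (k : nat) (d : D) : Prop :=
  exists c : nat -> D, (forall i, R (c i)) /\ d = \sum_(i < k) c i * x ^+ i.

Lemma pow_span0 k : pow_span k 0.
Proof.
exists (fun=> 0); split=> [i|]; first exact: subring0.
by rewrite big1 // => i _; rewrite mul0r.
Qed.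

Lemma pow_spanD k d e : pow_span k d -> pow_span k e -> pow_span k (d + e).
Proof.
move=> [c [Rc ->]] [c' [Rc' ->]]; exists (fun i => c i + c' i).
by split=> [i|]; [apply: subringD | rewrite -big_split; apply: eq_bigr => i _; rewrite mulrDl].
Qed.

Lemma pow_spanN k d : pow_span k d -> pow_span k (- d).
Proof.
move=> [c [Rc ->]]; exists (fun i => - c i).
by split=> [i|]; [apply: subringN | rewrite -sumrN; apply: eq_bigr => i _; rewrite mulNr].
Qed.

Lemma pow_span_sum k n (f : 'I_n -> D) :
  (forall i, pow_span k (f i)) -> pow_span k (\sum_(i < n) f i).
Proof. by move=> spf; elim/big_ind: _ => //; [apply: pow_span0 | apply: pow_spanD]. Qed.

Lemma pow_span_mull k r d : R r -> pow_span k d -> pow_span k (r * d).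
Proof.
move=> Rr [c [Rc ->]]; exists (fun i => r * c i).
by split=> [i|]; [apply: subringM | rewrite mulr_sumr; apply: eq_bigr => i _; rewrite mulrA].
Qed.

Lemma pow_span_monomial k r i : R r -> (i < k)%N -> pow_span k (r * x ^+ i).
Proof.
move=> Rr ltik; exists (fun j => if j == i then r else 0); split=> [j|].
  by case: eqP => _ //; apply: subring0.
rewrite (bigD1 (Ordinal ltik)) //= eqxx big1 ?addr0 // => j /negbTE neq_ji.
by rewrite -val_eqE /= in neq_ji; rewrite neq_ji mul0r.
Qed.

Lemma pow_span_const k r : R r -> pow_span k.+1 r.
Proof. by move=> Rr; have := pow_span_monomial Rr (ltn0Sn k); rewrite expr0 mulr1. Qed.

Lemma pow_span_widen k k' d : (k <= k')%N -> pow_span k d -> pow_span k' d.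
Proof.
move=> lekk' [c [Rc ->]]; exists (fun i => if (i < k)%N then c i else 0); split=> [i|].
  by case: ifP => _ //; apply: subring0.
rewrite (big_ord_widen k' (fun i => c i * x ^+ i) lekk') big_mkcond /=.
by apply: eq_bigr => i _; case: ifP => // _; rewrite mul0r.
Qed.

Lemma pow_span_mulX k d : pow_span k d -> pow_span k.+1 (d * x).
Proof.
move=> [c [Rc ->]]; exists (fun i => if i is j.+1 then c j else 0); split=> [[|i] //|].
  exact: subring0.
rewrite big_ord_recl /= mul0r add0r mulr_suml.
by apply: eq_bigr => i _; rewrite exprSr mulrA.
Qed.

Lemma pow_span_mulXn k n d : pow_span k d -> pow_span (k + n) (d * x ^+ n).
Proof.
move=> spd; elim: n => [|n IH]; first by rewrite addn0 expr0 mulr1.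
by rewrite addnS exprSr mulrA; apply: pow_span_mulX.
Qed.

Lemma pow_spanSr k d : pow_span k.+1 d ->
  exists f t, [/\ pow_span k f, R t & d = f + t * x ^+ k].
Proof.
move=> [c [Rc ->]]; exists (\sum_(i < k) c i * x ^+ i), (c k).
by split=> //; [exists c | rewrite big_ord_recr].
Qed.

Lemma pow_spanSl k d : pow_span k.+1 d ->
  exists t f, [/\ R t, pow_span k f & d = t + f * x].
Proof.
move=> [c [Rc ->]]; exists (c 0%N), (\sum_(i < k) c i.+1 * x ^+ i); split=> //.
  by exists (fun i => c i.+1).
rewrite big_ord_recl expr0 mulr1 mulr_suml; congr (_ + _).
by apply: eq_bigr => i _; rewrite /bump /= exprSr mulrA.
Qed.

End PowSpan.

Section NormalizingPowSpan.
Variables (D : unitRingType) (R : D -> Prop) (x : D).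
Hypotheses (subR : is_subring R) (Nx : normalizerR R x) (Ux : x \is a GRing.unit).

Lemma pow_span_mulr k r d : R r -> pow_span R x k d -> pow_span R x k (d * r).
Proof.
move=> Rr [c [Rc ->]]; exists (fun i => c i * (x ^+ i * r / x ^+ i)); split=> [i|].
  by apply: subringM => //; apply: normalizerR_conj => //; [apply: unitrX | apply: normalizerRX].
by rewrite mulr_suml; apply: eq_bigr => i _; rewrite -[RHS]mulrA divrK ?unitrX // mulrA.
Qed.

Definition adjoin (d : D) : Prop := exists k, pow_span R x k d.

Lemma adjoin_subring : is_subring adjoin.
Proof.
split.
- by exists 1%N; apply: pow_span_const => //; apply: subring1.
- move=> d e [k spd] [n spe]; exists (k + n)%N; apply: pow_spanD => //.
    exact: pow_span_widen (leq_addr _ _) spd.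
  by apply: pow_spanN => //; apply: pow_span_widen (leq_addl _ _) spe.
- move=> d e [k spd] [n [c [Rc ->]]]; exists (k + n)%N.
  rewrite mulr_sumr; apply: pow_span_sum => // i; rewrite mulrA.
  apply: (@pow_span_widen _ _ _ _ (k + i)) => //; first by rewrite leq_add2l ltnW.
  by apply: pow_span_mulXn => //; apply: pow_span_mulr.
Qed.

End NormalizingPowSpan.

Lemma adjoin_full (D : unitRingType) (R : D -> Prop) (x : D) :
  is_maximal_subring R -> normalizerR R x -> x \is a GRing.unit -> ~ R x ->
  forall d, adjoin R x d.
Proof.
move=> [subR _ maxR] Nx Ux NRx d; apply: NNPP => NRxd; apply: NRx.
apply: (maxR (adjoin R x)); first exact: adjoin_subring.
- by move=> r Rr; exists 1%N; apply: pow_span_const.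
- by exists d.
- exists 2%N; have := pow_span_monomial x subR (subring1 subR) (ltnSn 1).
  by rewrite mul1r expr1.
Qed.

Section FiniteSpan.
Variables (D : unitRingType) (R : D -> Prop) (x : D).
Hypotheses (subR : is_subring R) (Nx : normalizerR R x) (Ux : x \is a GRing.unit).

Lemma pow_span_invX n d : pow_span R x^-1 n d -> pow_span R x n.+1 (d * x ^+ n).
Proof.
move=> [c [Rc ->]]; rewrite mulr_suml; apply: pow_span_sum => // i.
have -> : x ^+ n = x ^+ i * x ^+ (n - i) by rewrite -exprD subnKC // ltnW.
rewrite -mulrA exprVn mulKr ?unitrX //.
by apply: pow_span_monomial => //; rewrite ltnS leq_subr.
Qed.

Lemma pow_span_mulX_closed k d :
  pow_span R x k (x ^+ k) -> pow_span R x k d -> pow_span R x k (d * x).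
Proof.
move=> spXk spd; have [f [t [spf Rt ->]]] := pow_spanSr (pow_span_mulX subR spd).
by apply: pow_spanD => //; apply: pow_span_mull.
Qed.

Lemma pow_span_adjoin k d :
  pow_span R x k.+1 (x ^+ k.+1) -> adjoin R x d -> pow_span R x k.+1 d.
Proof.
move=> spXk [j]; elim: j d => [|j IH] d spd.
  exact: pow_span_widen spd.
have [t [f [Rt spf ->]]] := pow_spanSl spd.
by apply: pow_spanD => //; [apply: pow_span_const | apply: pow_span_mulX_closed => //; apply: IH].
Qed.

Lemma pow_span_lead_absorb m a d : R a -> pow_span R x m (a * x ^+ m) ->
  pow_span R x m.+1 d -> pow_span R x m (a * d).
Proof.
move=> Ra spaXm spd; have [f [t [spf Rt ->]]] := pow_spanSr spd.
rewrite mulrDr; apply: pow_spanD => //; first exact: pow_span_mull.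
have -> : a * (t * x ^+ m) = a * x ^+ m * ((x ^+ m)^-1 * t * x ^+ m).
  by rewrite !mulrA mulrK // unitrX.
apply: pow_span_mulr => //; apply: normalizerR_conjV => //; first exact: unitrX.
exact: normalizerRX.
Qed.

Lemma pow_span_lead_absorbX m a k d : R a -> pow_span R x m.+1 (a * x ^+ m.+1) ->
  pow_span R x (m.+1 + k) d -> pow_span R x m.+1 (a ^+ k * d).
Proof.
move=> Ra spaXm; elim: k d => [|k IH] d; first by rewrite addn0 expr0 mul1r.
rewrite addnS => /pow_spanSl [t [f [Rt spf ->]]].
rewrite mulrDr; apply: pow_spanD => //.
  by apply: pow_span_const => //; apply: (subringM subR) => //; apply: subringX.
rewrite exprS -mulrA (mulrA (a ^+ k)); apply: pow_span_lead_absorb => //.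
by apply: pow_span_mulX => //; apply: IH.
Qed.

(* Write [d = a ^+ N * (a ^- N * d)]: [a ^+ N] maps [pow_span (m + N)] into
   [pow_span m]. *)
Lemma pow_span_shrink m a N : a \is a GRing.unit -> R a -> pow_span R x m (a * x ^+ m) ->
  (forall d, pow_span R x N d) -> forall d, pow_span R x m d.
Proof.
case: m => [|m] Ua Ra spaXm fullN d.
  have [c [_]] := spaXm; rewrite big_ord0 expr0 mulr1 => a0.
  by rewrite a0 unitr0 in Ua.
rewrite -[d](mulVKr (unitrX N Ua)); apply: pow_span_lead_absorbX => //.
exact: pow_span_widen (leq_addl _ _) (fullN _).
Qed.

End FiniteSpan.

Section PowBasis.
Variables (D : unitRingType) (R : D -> Prop) (x : D).
Hypotheses (Ddiv : is_division_ring D) (subR : is_subring R).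
Hypotheses (Nx : normalizerR R x) (Ux : x \is a GRing.unit).

Definition pow_free (k : nat) : Prop :=
  forall c : nat -> D, (forall i, R (c i)) -> \sum_(i < k) c i * x ^+ i = 0 ->
  forall i, (i < k)%N -> c i = 0.

Lemma pow_span_relation N k (c : nat -> D) i : (forall d, pow_span R x N d) ->
  (forall j, R (c j)) -> \sum_(j < k.+1) c j * x ^+ j = 0 -> (i <= k)%N -> c i != 0 ->
  forall d, pow_span R x k d.
Proof.
move=> fullN Rc; elim: k i => [|k IH] i.
  rewrite big_ord1 leqn0 => c0x0 /eqP -> ci0.
  apply: (pow_span_shrink subR Nx Ux _ (Rc 0%N) _ fullN); first exact: Ddiv.
  by rewrite c0x0; apply: pow_span0.
rewrite big_ord_recr /=; have [ck0 | ck0] := eqVneq (c k.+1) 0.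
  rewrite ck0 mul0r addr0 leq_eqVlt => sum0 /predU1P [-> | ltik]; first by rewrite ck0 eqxx.
  by move=> ci0 d; apply: pow_span_widen (leqnSn k) (IH i sum0 ltik ci0 d).
move=> /eqP; rewrite addrC addr_eq0 => /eqP lead _ _.
apply: (pow_span_shrink subR Nx Ux (Ddiv ck0) (Rc _) _ fullN).
by rewrite lead; apply: pow_spanN => //; exists c.
Qed.

Lemma pow_basis_exists k : (forall d, pow_span R x k d) ->
  exists m, (forall d, pow_span R x m d) /\ pow_free m.
Proof.
elim: k => [|k IH] fullk; first by exists 0%N.
have [free | dep] := classic (pow_free k.+1); first by exists k.+1.
apply: IH; apply: NNPP => nfull; apply: dep => c Rc sum0 i ltik; apply: NNPP => /eqP ci0.
by apply: nfull; apply: (pow_span_relation fullk Rc sum0 ltik ci0).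
Qed.

End PowBasis.

Section PowBasisConsequences.
Variables (D : unitRingType) (R : D -> Prop) (x : D) (m : nat).
Hypotheses (Ddiv : is_division_ring D) (subR : is_subring R).
Hypotheses (Nx : normalizerR R x) (Ux : x \is a GRing.unit).
Hypotheses (fullm : forall d, pow_span R x m d) (freem : pow_free R x m).

Lemma pow_free_ord (c : 'I_m -> D) : (forall i, R (c i)) ->
  \sum_i c i * x ^+ i = 0 -> forall i, c i = 0.
Proof.
move=> Rc sum0 i; pose c' n := oapp c 0 (insub n : option 'I_m).
have c'E (j : 'I_m) : c' j = c j by rewrite /c' valK.
rewrite -c'E; apply: freem => // [n | ].
  by rewrite /c'; case: (insub n) => [j|] /=; [apply: Rc | apply: subring0].
by rewrite -[RHS]sum0; apply: eq_bigr => j _; rewrite c'E.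
Qed.

Lemma pow_left_basis : left_basis_of_size R m.
Proof.
exists (fun i : 'I_m => x ^+ i); split; last exact: pow_free_ord.
by move=> d; have [c [Rc ->]] := fullm d; exists (fun i : 'I_m => c i).
Qed.

Lemma pow_right_basis : right_basis_of_size R m.
Proof.
have UXi (i : nat) := unitrX i Ux; have NXi (i : nat) := normalizerRX i Nx.
exists (fun i : 'I_m => x ^+ i); split.
  move=> d; have [c [Rc ->]] := fullm d.
  exists (fun i : 'I_m => (x ^+ i)^-1 * c i * x ^+ i); split.
    by move=> i; apply: normalizerR_conjV.
  by apply: eq_bigr => i _; rewrite mulrA mulVKr.
move=> c Rc sum0 i.
have conj0 := pow_free_ord (c := fun j => x ^+ j * c j / x ^+ j) _ _ i.
have -> : c i = (x ^+ i)^-1 * (x ^+ i * c i / x ^+ i) * x ^+ i.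
  by rewrite -mulrA divrK // mulKr.
rewrite conj0 ?mulr0 ?mul0r // => [j|]; first exact: normalizerR_conj.
by rewrite -[RHS]sum0; apply: eq_bigr => j _; rewrite divrK.
Qed.

Lemma pow_basis_sub_division_ring : sub_division_ring R.
Proof.
move=> b Rb b0; have Ub := Ddiv b0; have [c [Rc binv]] := fullm b^-1.
have m_gt0 : (0 < m)%N.
  have [c1 [_]] := fullm 1; case: (m) => [|k] //.
  by rewrite big_ord0 => /eqP; rewrite oner_eq0.
have sum_delta : \sum_(i < m) ((i : nat) == 0%N)%:R * x ^+ i = 1.
  rewrite -(prednK m_gt0) big_ord_recl expr0 mulr1 big1 ?addr0 // => i _.
  by rewrite mul0r.
have bc1 : b * c 0%N = 1.
  apply/eqP; rewrite -subr_eq0; apply/eqP.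
  apply: (freem (c := fun i => b * c i - (i == 0%N)%:R)) m_gt0.
    move=> i; apply: subringB => //; first exact: subringM.
    by case: (i == 0%N); [apply: subring1 | apply: subring0].
  rewrite (eq_bigr (fun i : 'I_m => b * (c i * x ^+ i) - ((i : nat) == 0%N)%:R * x ^+ i)).
    by rewrite sumrB -mulr_sumr -binv sum_delta mulrV // subrr.
  by move=> i _; rewrite mulrBl mulrA.
split=> //; exists (c 0%N); split=> //.
by rewrite -(mulKr Ub (c 0%N)) bc1 mulr1 mulVr.
Qed.

End PowBasisConsequences.

Lemma normalizer_outside_basis (D : unitRingType) (R : D -> Prop) (x : D) :
  is_division_ring D -> is_maximal_subring R ->
  normalizerR R x -> x != 0 -> ~ R x -> ~ R x^-1 ->
  sub_division_ring R /\ exists n, left_basis_of_size R n /\ right_basis_of_size R n.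
Proof.
move=> Ddiv maxR Nx x0 NRx NRxV; have subR : is_subring R by case: maxR.
have Ux : x \is a GRing.unit := Ddiv _ x0.
have NxV := normalizerRV Ux Nx.
have UxV : x^-1 \is a GRing.unit by rewrite unitrV.
have [n spx] := adjoin_full maxR NxV UxV NRxV x.
have spXn : pow_span R x n.+1 (x ^+ n.+1) by rewrite exprS; apply: pow_span_invX.
have fulln d : pow_span R x n.+1 d by apply: pow_span_adjoin => //; apply: adjoin_full.
have [m [fullm freem]] := pow_basis_exists Ddiv subR Nx Ux fulln.
split; first exact: pow_basis_sub_division_ring freem.
by exists m; split; [apply: pow_left_basis | apply: pow_right_basis].
Qed.

Theorem theorem2p5 (D : unitRingType) (R : D -> Prop) :
  is_division_ring D ->
  (exists x y : D, x * y != y * x) ->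
  is_maximal_subring R ->
  (forall x, normalizerR R x <-> (unitsR R x \/ x = 0))
  \/ (sub_division_ring R /\ exists n : nat, left_basis_of_size R n /\ right_basis_of_size R n)
  \/ (~ sub_division_ring R /\
      exists a : D, [/\ R a, a != 0, ~ unitsR R a & normalizerR R a]).
Proof.
move=> Ddiv _ maxR; have subR : is_subring R by case: maxR.
have [[x [Nx x0 nUx]] | noN] :=
  classic (exists x, [/\ normalizerR R x, x != 0 & ~ unitsR R x]); last first.
  left=> x; split=> [Nx | [Ux | ->]]; last exact: normalizerR0.
    have [-> | x0] := eqVneq x 0; first by right.
    by left; apply: NNPP => nUx; apply: noN; exists x.
  exact: normalizerR_unit.
right; have third a : R a -> a != 0 -> ~ unitsR R a -> normalizerR R a ->
    ~ sub_division_ring R /\ exists a, [/\ R a, a != 0, ~ unitsR R a & normalizerR R a].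
  by move=> Ra a0 nUa Na; split=> [divR | ]; [apply/nUa/divR | exists a].
have Ux : x \is a GRing.unit := Ddiv _ x0.
have [Rx | NRx] := classic (R x); first by right; apply: (third x).
have [RxV | NRxV] := classic (R x^-1); last by left; apply: normalizer_outside_basis.
right; apply: (third x^-1) => //; first by rewrite invr_eq0.
  by move=> [_ [y [Ry _ yxV]]]; apply: NRx; rewrite -[x]mul1r -yxV divrK.
exact: normalizerRV.
Qed.
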